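(* Let $\mathcal D\subseteq(0,1)$ be nonempty and $f:\mathcal D\to(0,1)$. If a finite automaton with $n$ states simulates $f$, then there exist polynomials $g,h\in\mathbb Z[x]$ of degree at most $n$, with $h(x)\neq0$ for all $x\in(0,1)$, such that $F=g/h$ satisfies $0<F(x)<1$ for all $x\in(0,1)$ and $F(p)=f(p)$ for all $p\in\mathcal D$.
   Context: For $w\in\{0,1\}^*$ let $n_i(w)$ be the number of $i$'s in $w$; $\mathbf P_p[w]=p^{n_1(w)}(1-p)^{n_0(w)}$, $\mathbf P_p[L]=\sum_{w\in L}\mathbf P_p[w]$. A simulation of $f:\mathcal D\to[0,1]$ is a pair of disjoint languages $L_0,L_1\subseteq\{0,1\}^*$ with $L_0\cup L_1$ prefix-free such that $\mathbf P_p[L_0\cup L_1]=1$ and $\mathbf P_p[L_1]=f(p)$ for all $p\in\mathcal D$. A finite automaton consists of finite state set $S$, start state $s_0$, transition function $\delta:S\times\{0,1\}\to S$ (extended to strings), and disjoint absorbing final-state sets $S_0,S_1$; $L_i$ is the set of strings $w$ with $\delta(s_0,w)\in S_i$ and $\delta(s_0,w')\notin S_0\cup S_1$ for every proper prefix $w'$ of $w$; the automaton simulates $f$ if $(L_0,L_1)$ is a simulation of $f$. *)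

From HB Require Import structures.
From mathcomp Require Import all_boot all_order all_algebra.
From mathcomp Require Import classical_sets boolp reals constructive_ereal ereal esum.
Set Implicit Arguments. Unset Strict Implicit. Unset Printing Implicit Defensive.
Import Order.TTheory GRing.Theory Num.Theory.
Local Open Scope classical_set_scope.
Local Open Scope ring_scope.

Definition n1 (w : seq bool) : nat := count (pred1 true) w.
Definition n0 (w : seq bool) : nat := count (pred1 false) w.

Definition Pw {R : realType} (p : R) (w : seq bool) : R :=
  p ^+ n1 w * (1 - p) ^+ n0 w.

Definition PL {R : realType} (p : R) (L : set (seq bool)) : \bar R :=
  \esum_(w in L) (Pw p w)%:E.

Definition prefix_free (L : set (seq bool)) : Prop :=
  forall u v, L u -> L v -> prefix u v -> u = v.

Definition simulation {R : realType} (D : set R) (f : R -> R)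
  (L0 L1 : set (seq bool)) : Prop :=
  [/\ L0 `&` L1 = set0,
      prefix_free (L0 `|` L1)
    & forall p, D p -> PL p (L0 `|` L1) = 1%E /\ PL p L1 = (f p)%:E].

Record automaton (S : finType) := Automaton {
  s0 : S;
  delta : S -> bool -> S;
  fin0 : {set S};
  fin1 : {set S};
  fin_disj : fin0 :&: fin1 = finset.set0;
  fin0_abs : forall s b, s \in fin0 -> delta s b \in fin0;
  fin1_abs : forall s b, s \in fin1 -> delta s b \in fin1 }.

Definition run (S : finType) (A : automaton S) (s : S) (w : seq bool) : S :=
  foldl (delta A) s w.

Definition auto_lang (S : finType) (A : automaton S) (Si : {set S})
  : set (seq bool) :=
  [set w | run A (s0 A) w \in Si /\
     forall k, (k < size w)%N ->
       run A (s0 A) (take k w) \notin (fin0 A :|: fin1 A)].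

Definition simulates {R : realType} (S : finType) (A : automaton S)
  (D : set R) (f : R -> R) : Prop :=
  simulation D f (auto_lang A (fin0 A)) (auto_lang A (fin1 A)).

Definition zeval {R : realType} (g : {poly int}) (x : R) : R :=
  (map_poly (fun z : int => z%:~R) g).[x].

From HB Require Import structures.
From mathcomp Require Import all_boot all_order all_algebra.
From mathcomp Require Import classical_sets boolp reals constructive_ereal ereal esum.
From mathcomp Require Import fsbigop cardinality perm.
From mathcomp Require Import ring lra zify.
Import Order.TTheory GRing.Theory Num.Theory.
Set Implicit Arguments. Unset Strict Implicit. Unset Printing Implicit Defensive.
Local Open Scope classical_set_scope.
Local Open Scope ring_scope.

(* For x in (0,1), call a function u on the states harmonic if
   u(s) = x u(delta(s,1)) + (1-x) u(delta(s,0)) at every live state s, i.e. a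
   non-halting state from which some halting state is reachable. A maximum of a
   harmonic function propagates along any word up to the first halting state, which
   yields a maximum principle: harmonic functions are bounded by their values at the
   other states. Hence the linear system "u harmonic, u = [s \in X] elsewhere" is
   nonsingular; its coefficients are affine in x, so by Cramer's rule its solution at
   s0 for X = S_1 is g(x)/h(x) with h the determinant, of degree at most n. The
   maximum principle gives 0 < u(s0) < 1, both S_0 and S_1 being reachable from s0
   since 0 < f < 1. On D, a first-step induction bounds P[L_i] by the solution
   u_i(s0) for X = S_i; as u_0 + u_1 <= 1 and P[L_0] + P[L_1] = 1, this forces
   u_1(s0) = f(p), without ever computing the hitting probabilities exactly. *)

Lemma convex_comb_eq_max (R : realFieldType) (x c a b : R) :
  0 < x < 1 -> a <= c -> b <= c -> c = x * a + (1 - x) * b -> a = c /\ b = c.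
Proof.
move=> /andP[x0 x1] ac bc e.
have ha : 0 <= x * (c - a) by apply: mulr_ge0; lra.
have hb : 0 <= (1 - x) * (c - b) by apply: mulr_ge0; lra.
have hab : x * (c - a) + (1 - x) * (c - b) = 0 by rewrite e; ring.
have /eqP : x * (c - a) = 0 by lra.
have /eqP : (1 - x) * (c - b) = 0 by lra.
by rewrite !mulf_eq0 => /orP[/eqP|/eqP] ? /orP[/eqP|/eqP] ?; lra.
Qed.

Lemma Pw_nil (R : realType) (p : R) : Pw p [::] = 1.
Proof. by rewrite /Pw /= !expr0 mulr1. Qed.

Lemma Pw_cons (R : realType) (p : R) b w :
  Pw p (b :: w) = (if b then p else 1 - p) * Pw p w.
Proof. by case: b; rewrite /Pw /n1 /n0 /= ?add0n ?add1n exprS; ring. Qed.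

Definition subtree (b : bool) (r : seq (seq bool)) : seq (seq bool) :=
  [seq behead w | w <- r & if w is c :: _ then c == b else false].

Lemma subtree_uniq b r : uniq r -> uniq (subtree b r).
Proof.
move=> ur; rewrite map_inj_in_uniq ?filter_uniq // => w1 w2.
rewrite !mem_filter => /andP[h1 _] /andP[h2 _].
by case: w1 h1 => [//|c1 w1] /eqP ->; case: w2 h2 => [//|c2 w2] /eqP -> /= ->.
Qed.

Lemma subtree_mem b r w : w \in subtree b r -> (b :: w) \in r.
Proof.
move/mapP => [w0]; rewrite mem_filter => /andP[h1 h2] ->.
by case: w0 h1 h2 => [//|c w0] /eqP ->.
Qed.

Lemma sum_Pw_subtree (R : realType) (p : R) (r : seq (seq bool)) :
  (forall w, w \in r -> w != [::]) ->
  \sum_(w <- r) Pw p w =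
    p * \sum_(w <- subtree true r) Pw p w + (1 - p) * \sum_(w <- subtree false r) Pw p w.
Proof.
elim: r => [|w r IH] hr; first by rewrite /subtree /= !big_nil; ring.
rewrite big_cons IH; last by move=> w' hw'; apply: hr; rewrite inE hw' orbT.
have := hr w (mem_head _ _).
by case: w {hr} => [//|[] w'] _; rewrite /subtree /= !big_cons Pw_cons /=; ring.
Qed.

Lemma sum_indicator_mul (R : nzSemiRingType) n (a : 'I_n) (F : 'I_n -> R) :
  \sum_j (j == a)%:R * F j = F a.
Proof. by rewrite (bigD1 a) //= eqxx mul1r big1 ?addr0 // => j /negbTE ->; rewrite mul0r. Qed.

Lemma size_det_affine n (M : 'M[{poly int}]_n) :
  (forall i j, (size (M i j) <= 2)%N) -> (size (\det M) <= n.+1)%N.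
Proof.
move=> hM; apply: leq_trans (size_sum _ _ _) _; apply/bigmax_leqP => s _.
have hprod : (size (\prod_i M i (s i))%R <= n.+1)%N.
  apply: leq_trans (size_poly_prod_leq _ _) _; rewrite cardE size_enum_ord.
  have : (\sum_i size (M i (s i)) <= \sum_(i < n) 2)%N by apply: leq_sum => i _.
  rewrite sum_nat_const card_ord; lia.
by rewrite mulr_sign; case: (odd_perm s); rewrite ?size_polyN.
Qed.

Lemma size_cofactor_affine n (M : 'M[{poly int}]_n.+1) i j :
  (forall i j, (size (M i j) <= 2)%N) -> (size (cofactor M i j) <= n.+2)%N.
Proof.
move=> hM; rewrite /cofactor -signr_odd mulr_sign.
have hdet : (size (\det (row' i (col' j M))) <= n.+2)%N.
  by apply: leq_trans (size_det_affine _) _ => // a b; rewrite !mxE.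
by case: odd; rewrite ?size_polyN.
Qed.

Section Automaton.
Variables (S : finType) (A : automaton S).

Definition halted (s : S) : bool := s \in fin0 A :|: fin1 A.

Definition live (s : S) : bool :=
  `[< ~~ halted s /\ exists w, halted (run A s w) >].

Lemma run_cat s w1 w2 : run A s (w1 ++ w2) = run A (run A s w1) w2.
Proof. exact: foldl_cat. Qed.

Lemma run_fin0 w s : s \in fin0 A -> run A s w \in fin0 A.
Proof. by elim: w s => [//|b w IH] s s0; apply: IH; exact: fin0_abs. Qed.

Lemma run_fin1 w s : s \in fin1 A -> run A s w \in fin1 A.
Proof. by elim: w s => [//|b w IH] s s1; apply: IH; exact: fin1_abs. Qed.

Lemma fin0_notin_fin1 s : s \in fin0 A -> s \notin fin1 A.
Proof. by move=> s0; apply/negP => s1; have /setP/(_ s) := fin_disj A; rewrite !inE s0 s1. Qed.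

Lemma halted_run_fin1 s w : halted s -> run A s w \in fin1 A -> s \in fin1 A.
Proof.
rewrite /halted inE => /orP[s0 h1|//].
by have := fin0_notin_fin1 (run_fin0 w s0); rewrite h1.
Qed.

Lemma halted_run_fin0 s w : halted s -> run A s w \in fin0 A -> s \in fin0 A.
Proof.
rewrite /halted inE => /orP[//|s1 /fin0_notin_fin1].
by rewrite run_fin1.
Qed.

Lemma live_halted s : live s -> ~~ halted s.
Proof. by move/asboolP => []. Qed.

Lemma halted_live s : halted s -> ~~ live s.
Proof. by move=> hs; apply/negP => /live_halted; rewrite hs. Qed.

Lemma liveI s w : ~~ halted s -> halted (run A s w) -> live s.
Proof. by move=> hs hw; apply/asboolP; split=> //; exists w. Qed.

Section Harmonic.
Variables (R : realFieldType) (x : R).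
Hypothesis x01 : 0 < x < 1.

Definition harmonic (v : S -> R) : Prop :=
  forall s, live s -> v s = x * v (delta A s true) + (1 - x) * v (delta A s false).

Definition boundary (X : {set S}) (v : S -> R) : Prop :=
  forall t, ~~ live t -> v t = (t \in X)%:R.

Lemma harmonicN v : harmonic v -> harmonic (fun s => - v s).
Proof. by move=> hv s ls; rewrite hv //; ring. Qed.

Lemma harmonicD u v : harmonic u -> harmonic v -> harmonic (fun s => u s + v s).
Proof. by move=> hu hv s ls; rewrite hu // hv //; ring. Qed.

Lemma harmonic_max_path v c w s :
  harmonic v -> (forall t, v t <= c) -> v s = c -> halted (run A s w) ->
  exists w1 w2, [/\ w = w1 ++ w2, halted (run A s w1) & v (run A s w1) = c].
Proof.
move=> hv vc; elim: w s => [|b w IH] s vs hw; first by exists [::], [::].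
have [hs|hs] := boolP (halted s); first by exists [::], (b :: w).
have ls : live s by apply: liveI hw.
have [v1 v0] := convex_comb_eq_max x01 (vc _) (vc _) (etrans (esym vs) (hv s ls)).
have vb : v (delta A s b) = c by case: b {hw IH}.
have [w1 [w2 [-> hw1 vw1]]] := IH (delta A s b) vb hw.
by exists (b :: w1), w2.
Qed.

Lemma harmonic_le v c :
  harmonic v -> (forall t, ~~ live t -> v t <= c) -> forall t, v t <= c.
Proof.
move=> hv vc t.
have [m _ vm] := arg_maxP v (isT : (predT : {pred S}) t).
apply: le_trans (vm t isT) _.
have [lm|] := boolP (live m); last exact: vc.
have /asboolP[hm [w hw]] := lm.
have [w1 [_ [_ hw1 <-]]] := harmonic_max_path hv (fun t => vm t isT) (erefl _) hw.
exact/vc/halted_live.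
Qed.

Lemma harmonic_ge v c :
  harmonic v -> (forall t, ~~ live t -> c <= v t) -> forall t, c <= v t.
Proof.
move=> hv vc t; rewrite -lerN2.
by apply: (harmonic_le (harmonicN hv)) => s ls; rewrite lerN2 vc.
Qed.

Lemma harmonic_boundary01 X v :
  harmonic v -> boundary X v -> forall t, 0 <= v t <= 1.
Proof.
move=> hv bv t; have X01 s : ~~ live s -> 0 <= v s <= 1.
  by move=> ls; rewrite bv //; case: (s \in X); rewrite ?lexx ?ler01.
apply/andP; split.
  by apply: harmonic_ge => // s /X01/andP[].
by apply: harmonic_le => // s /X01/andP[].
Qed.

Lemma harmonic_reach_fin1 v s w :
  harmonic v -> boundary (fin1 A) v -> run A s w \in fin1 A -> 0 < v s.
Proof.
move=> hv bv hw; have /andP[v0 _] := harmonic_boundary01 hv bv s.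
rewrite lt_neqAle v0 andbT; apply/eqP => vs0.
have hw' : halted (run A s w) by rewrite /halted inE hw orbT.
have [||w1 [w2 [ew ht vt]]] := harmonic_max_path (c := 0) (harmonicN hv) _ _ hw'.
- by move=> t; rewrite oppr_le0; have /andP[] := harmonic_boundary01 hv bv t.
- by rewrite -vs0 oppr0.
rewrite ew run_cat in hw.
move: vt; rewrite bv ?halted_live // (halted_run_fin1 ht hw).
by move/eqP; rewrite oppr_eq0 oner_eq0.
Qed.

Lemma harmonic_reach_fin0 v s w :
  harmonic v -> boundary (fin1 A) v -> run A s w \in fin0 A -> v s < 1.
Proof.
move=> hv bv hw; have /andP[_ v1] := harmonic_boundary01 hv bv s.
rewrite lt_neqAle v1 andbT; apply/eqP => vs1.
have hw' : halted (run A s w) by rewrite /halted inE hw.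
have [|w1 [w2 [ew ht vt]]] := harmonic_max_path (c := 1) hv _ vs1 hw'.
  by move=> t; have /andP[] := harmonic_boundary01 hv bv t.
rewrite ew run_cat in hw.
move: vt; rewrite bv ?halted_live //.
by rewrite (negbTE (fin0_notin_fin1 (halted_run_fin0 ht hw))) => /eqP; rewrite eq_sym oner_eq0.
Qed.

End Harmonic.

Definition hit_lang (s : S) (X : {set S}) : set (seq bool) :=
  [set w | run A s w \in X /\
     forall k, (k < size w)%N -> ~~ halted (run A s (take k w))].

Lemma hit_lang_cons s X b w :
  hit_lang s X (b :: w) -> ~~ halted s /\ hit_lang (delta A s b) X w.
Proof. by move=> [hX hpre]; split; [exact: (hpre 0%N) | split=> // k /(hpre k.+1)]. Qed.

Section HittingProbability.
Variables (R : realType) (p : R) (X : {set S}) (u : S -> R).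
Hypotheses (p01 : 0 < p < 1) (hu : harmonic p u) (bu : boundary X u).
Hypothesis X_halted : forall t, t \in X -> halted t.

Lemma sum_hit_lang_le k s r :
  uniq r -> (forall w, w \in r -> hit_lang s X w) ->
  (forall w, w \in r -> (size w < k)%N) ->
  \sum_(w <- r) Pw p w <= u s.
Proof.
have u_ge0 t : 0 <= u t by have /andP[] := harmonic_boundary01 p01 hu bu t.
elim: k s r => [|k IH] s r ur rX rk.
  by case: r {ur rX} rk => [|w r] rk; [rewrite big_nil | have := rk w (mem_head _ _)].
have [hs|hs] := boolP (halted s).
  have r_nil w : w \in r -> w = [::].
    by case: w => [//|b w] /rX /hit_lang_cons[]; rewrite hs.
  case: r ur rX r_nil {rk} => [_ _ _|w [|w' r] ur rX r_nil]; first by rewrite big_nil.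
    rewrite big_seq1 (r_nil w (mem_head _ _)) Pw_nil.
    have [sX _] := rX w (mem_head _ _); rewrite (r_nil w (mem_head _ _)) /= in sX.
    by rewrite bu ?halted_live // sX.
  move: ur; rewrite /= (r_nil w (mem_head _ _)) (r_nil w'); last by rewrite !inE eqxx orbT.
  by rewrite mem_head.
case: r ur rX rk => [|w0 r] ur rX rk.
  by rewrite big_nil.
have ls : live s by apply: (liveI hs (w := w0)); apply: X_halted; have [] := rX w0 (mem_head _ _).
rewrite sum_Pw_subtree; last by move=> w /rX[/X_halted hw _]; apply: contraTneq hw => ->.
rewrite (hu ls).
have sub_le b : \sum_(w <- subtree b (w0 :: r)) Pw p w <= u (delta A s b).
  apply: IH; first exact: subtree_uniq.
    by move=> w /subtree_mem /rX /hit_lang_cons[].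
  by move=> w /subtree_mem /rk.
case/andP: p01 => p0 p1.
by apply: lerD; apply: ler_wpM2l; rewrite ?sub_le //; lra.
Qed.

Lemma PL_hit_lang_le s : (PL p (hit_lang s X) <= (u s)%:E)%E.
Proof.
rewrite /PL /esum; apply: ge_ereal_sup => _ [F [finF FL] <-].
rewrite fsbig_finite // sumEFin lee_fin.
set r := finmap.enum_fset _.
apply: (@sum_hit_lang_le (\max_(w <- r) size w).+1).
- exact: finmap.fset_uniq.
- by move=> w; rewrite /r (in_fset_set finF) in_setE => /FL.
- by move=> w hw; rewrite ltnS; exact: (leq_bigmax_seq (P := xpredT) w hw).
Qed.

End HittingProbability.

Lemma halted_fin0 t : t \in fin0 A -> halted t.
Proof. by rewrite /halted inE => ->. Qed.

Lemma halted_fin1 t : t \in fin1 A -> halted t.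
Proof. by rewrite /halted inE => ->; rewrite orbT. Qed.

Section Simulation.
Variables (R : realType) (D : set R) (f : R -> R).
Hypothesis simA : simulates A D f.

Lemma simulation_reach p : D p -> 0 < f p < 1 ->
  (exists w, run A (s0 A) w \in fin1 A) /\ (exists w, run A (s0 A) w \in fin0 A).
Proof.
move=> Dp /andP[f0 f1]; have [_ _ /(_ p Dp)[PL01 PL1]] := simA.
have empty_lang (X : {set S}) : ~ (exists w, run A (s0 A) w \in X) -> auto_lang A X = set0.
  by move=> nX; apply/seteqP; split=> // w [hw _]; apply: nX; exists w.
split; apply: contrapT => /empty_lang L0.
  by move: PL1; rewrite L0 /PL esum_set0 => -[f0']; move: f0; rewrite -f0' ltxx.
by move: PL01; rewrite L0 set0U PL1 => -[f1']; move: f1; rewrite f1' ltxx.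
Qed.

Lemma simulation_value p (u0 u1 : S -> R) : D p -> 0 < p < 1 ->
  harmonic p u0 -> boundary (fin0 A) u0 ->
  harmonic p u1 -> boundary (fin1 A) u1 -> u1 (s0 A) = f p.
Proof.
move=> Dp p01 hu0 bu0 hu1 bu1; have [L01 _ /(_ p Dp)[PL01 PL1]] := simA.
have P0 := PL_hit_lang_le p01 hu0 bu0 halted_fin0 (s0 A).
have P1 := PL_hit_lang_le p01 hu1 bu1 halted_fin1 (s0 A).
have u01 : u0 (s0 A) + u1 (s0 A) <= 1.
  apply: harmonic_le (harmonicD hu0 hu1) _ _ => // t lt.
  rewrite bu0 // bu1 //; have [t0|t0] := boolP (t \in fin0 A).
    by rewrite (negbTE (fin0_notin_fin1 t0)) addr0.
  by rewrite add0r; case: (t \in fin1 A); rewrite ?ler01.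
set L0 := auto_lang A (fin0 A) in L01 PL01 P0.
set L1 := auto_lang A (fin1 A) in L01 PL01 PL1 P1.
rewrite /PL (esumID L0) in PL01; last first.
  by move=> w _; rewrite lee_fin /Pw; case/andP: p01 => ? ?; apply: mulr_ge0; apply: exprn_ge0; lra.
have eL0 : (L0 `|` L1) `&` L0 = L0.
  by apply/seteqP; split=> w; [case | move=> ?; split=> //; left].
have eL1 : (L0 `|` L1) `&` ~` L0 = L1.
  apply/seteqP; split=> w; first by case=> -[].
  by move=> L1w; split; [right | move=> L0w; rewrite -[False]/(set0 w) -L01].
rewrite eL0 eL1 -/(PL p L0) -/(PL p L1) PL1 in PL01.
rewrite PL1 in P1.
have : (1%:E <= (u0 (s0 A))%:E + (f p)%:E)%E by rewrite -PL01; apply: leeD2r.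
by rewrite -EFinD !lee_fin in P1 *; lra.
Qed.

End Simulation.

Section LinearSystem.
Variable R : realType.

Definition horner_int (x : R) : {rmorphism {poly int} -> R} :=
  horner_morph (fun a => mulrC x (intr a) : GRing.comm x (intr a)).

Definition system_mx : 'M[{poly int}]_#|S| :=
  \matrix_(i, j) let s := enum_val i in
   ((if live s then (j == enum_rank (delta A s false))%:R
                    - (j == enum_rank (delta A s true))%:R else 0 : int)%:P * 'X
    + ((j == i)%:R - (if live s then (j == enum_rank (delta A s false))%:R else 0) : int)%:P).

Definition system_mx_at (x : R) : 'M[R]_#|S| := map_mx (horner_int x) system_mx.

Lemma system_mx_size i j : (size (system_mx i j) <= 2)%N.
Proof.
rewrite mxE size_MXaddC; case: ifP => // _.
exact: leq_trans (size_polyC_leq1 _) _.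
Qed.

Lemma system_mx_at_row x i (w : 'I_#|S| -> R) :
  \sum_j system_mx_at x i j * w j =
  if live (enum_val i) then
    w i - x * w (enum_rank (delta A (enum_val i) true))
        - (1 - x) * w (enum_rank (delta A (enum_val i) false))
  else w i.
Proof.
rewrite /system_mx_at; under eq_bigr do
  rewrite !mxE rmorphD rmorphM /= horner_morphX !horner_morphC.
case: (live _); last first.
  by under eq_bigr do rewrite rmorph0 mul0r add0r subr0 rmorph_nat; rewrite sum_indicator_mul.
set a0 := enum_rank _; set a1 := enum_rank _.
under eq_bigr do rewrite !rmorphB !rmorph_nat.
have expand j : (((j == a0)%:R - (j == a1)%:R) * x + ((j == i)%:R - (j == a0)%:R)) * w j
  = x * ((j == a0)%:R * w j) - x * ((j == a1)%:R * w j) + (j == i)%:R * w j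
    - (j == a0)%:R * w j :> R by ring.
rewrite (eq_bigr _ (fun j _ => expand j)).
rewrite sumrB big_split sumrB /= -!mulr_sumr !sum_indicator_mul; ring.
Qed.

(* Uniqueness for the system is the maximum principle for harmonic functions. *)
Lemma system_mx_at_unit x : 0 < x < 1 -> system_mx_at x \in unitmx.
Proof.
move=> x01; rewrite unitmxE unitfE -det_tr; apply/negP => /det0P [v v_neq0 hv].
pose u t := v 0 (enum_rank t).
have hrow i : \sum_j system_mx_at x i j * v 0 j = 0.
  move/matrixP: hv => /(_ 0 i); rewrite !mxE => hv; rewrite -[RHS]hv.
  by apply: eq_bigr => j _; rewrite [RHS]mulrC !mxE.
have hu : harmonic x u.
  by move=> t lt; have := hrow (enum_rank t); rewrite system_mx_at_row enum_rankK lt /u => h; lra.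
have u_bd t : ~~ live t -> u t = 0.
  by move=> lt; have := hrow (enum_rank t); rewrite system_mx_at_row enum_rankK (negbTE lt).
have u0 t : u t = 0.
  apply/eqP; rewrite eq_le; apply/andP; split.
    by apply: (harmonic_le x01 hu) => s /u_bd ->.
  by apply: (harmonic_ge x01 hu) => s /u_bd ->.
by move/eqP: v_neq0; apply; apply/rowP => j; rewrite mxE -(enum_valK j) -/(u _) u0.
Qed.

Definition indicator_col (X : {set S}) : 'cV[R]_#|S| := \col_i (enum_val i \in X)%:R.

Definition absorb_prob (X : {set S}) (x : R) (t : S) : R :=
  (invmx (system_mx_at x) *m indicator_col X) (enum_rank t) 0.

Lemma absorb_prob_solves (X : {set S}) x : 0 < x < 1 -> (forall t, t \in X -> halted t) ->
  harmonic x (absorb_prob X x) /\ boundary X (absorb_prob X x).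
Proof.
move=> x01 X_halted.
have hrow i : \sum_j system_mx_at x i j * (invmx (system_mx_at x) *m indicator_col X) j 0
    = (enum_val i \in X)%:R.
  move/matrixP: (mulKVmx (system_mx_at_unit x01) (indicator_col X)) => /(_ i 0).
  by rewrite !mxE => <-; apply: eq_bigr => j _; rewrite !mxE.
split=> t lt; have := hrow (enum_rank t); rewrite system_mx_at_row enum_rankK ?lt //.
  have /negbTE -> : t \notin X by exact: contra (X_halted t) (live_halted lt).
  by rewrite /absorb_prob (_ : false%:R = 0 :> R) // => h; lra.
by rewrite (negbTE lt).
Qed.

Definition den_poly : {poly int} := \det system_mx.

Definition num_poly : {poly int} :=
  \sum_(j | enum_val j \in fin1 A) \adj system_mx (enum_rank (s0 A)) j.

Lemma zeval_den_poly x : zeval den_poly x = \det (system_mx_at x).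
Proof. by rewrite /den_poly /system_mx_at det_map_mx. Qed.

Lemma absorb_prob_s0E x : 0 < x < 1 ->
  absorb_prob (fin1 A) x (s0 A) = zeval num_poly x / zeval den_poly x.
Proof.
move=> x01; rewrite zeval_den_poly /absorb_prob /invmx (system_mx_at_unit x01).
rewrite -scalemxAl !mxE mulrC; congr (_ * _).
rewrite /zeval -[horner _ _]/(horner_int x num_poly) rmorph_sum -map_mx_adj.
rewrite [RHS]big_mkcond; apply: eq_bigr => j _; rewrite !mxE.
by case: (enum_val j \in fin1 A); rewrite ?mulr1 ?mulr0.
Qed.

Lemma den_poly_size : (size den_poly <= #|S|.+1)%N.
Proof. exact: size_det_affine system_mx_size. Qed.

Lemma num_poly_size : (size num_poly <= #|S|.+1)%N.
Proof.
apply: leq_trans (size_sum _ _ _) _; apply/bigmax_leqP => j _.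
move: system_mx (enum_rank (s0 A)) j system_mx_size.
case: #|S| => [|n] M i j hM; first by case: i.
by rewrite mxE; apply: size_cofactor_affine.
Qed.

End LinearSystem.

End Automaton.

Unset Implicit Arguments.

Theorem proposition2p3 (R : realType) (D : set R) (f : R -> R)
  (S : finType) (A : automaton S) :
  D !=set0 ->
  (forall p, D p -> 0 < p < 1) ->
  (forall p, D p -> 0 < f p < 1) ->
  simulates A D f ->
  exists g h : {poly int},
    [/\ (size g <= #|S|.+1)%N, (size h <= #|S|.+1)%N,
        (forall x : R, 0 < x < 1 -> zeval h x != 0),
        (forall x : R, 0 < x < 1 -> 0 < zeval g x / zeval h x < 1)
      & (forall p, D p -> zeval g p / zeval h p = f p)].
Proof.
move=> [p0 Dp0] D01 f01 simA.
have [[w1 hw1] [w0 hw0]] := simulation_reach simA Dp0 (f01 p0 Dp0).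
exists (num_poly A), (den_poly A); split.
- exact: num_poly_size.
- exact: den_poly_size.
- by move=> x x01; rewrite zeval_den_poly -unitfE -unitmxE system_mx_at_unit.
- move=> x x01; rewrite -absorb_prob_s0E //.
  have [hu bu] := absorb_prob_solves x01 (@halted_fin1 _ A).
  by rewrite (harmonic_reach_fin1 x01 hu bu hw1) (harmonic_reach_fin0 x01 hu bu hw0).
- move=> p Dp; have p01 := D01 p Dp; rewrite -absorb_prob_s0E //.
  have [hu0 bu0] := absorb_prob_solves p01 (@halted_fin0 _ A).
  have [hu1 bu1] := absorb_prob_solves p01 (@halted_fin1 _ A).
  exact (simulation_value simA Dp p01 hu0 bu0 hu1 bu1).
Qed.
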